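(* Let $\mathcal{B}$ be a base, $n\ge1$, $A^1,\dots,A^n$ formulas and $\Delta$ a finite set of formulas. Then $\{A^1,\dots,A^n\}\Vdash_{\mathcal{B}}\Delta$ if and only if for every base $\mathcal{C}\supseteq\mathcal{B}$ and all (arbitrary, not necessarily atomic) finite sets of formulas $\Theta^1,\dots,\Theta^n$: if $\Vdash_{\mathcal{C}}\Theta^i,A^i$ for all $1\le i\le n$, then $\Vdash_{\mathcal{C}}\Theta^1,\dots,\Theta^n,\Delta$.
   Context: Fix a countably infinite set $\mathsf{At}$ of atoms. Formulas are built from atoms and the constant $\bot$ using the binary connectives $\land,\lor,\to$. All contexts are finite sets (not multisets) of formulas; a comma denotes union; a subscript $\mathsf{At}$ indicates a finite set of atoms. An atomic sequent has the form $\Gamma_{\mathsf{At}} \Rightarrow \Delta_{\mathsf{At}}$. An atomic rule has finitely many (possibly zero) atomic sequents as premises and one atomic sequent as conclusion; a rule with zero premises is an atomic axiom. A base is a (possibly empty) set of atomic rules; $\mathcal{C}\supseteq\mathcal{B}$ ($\mathcal{C}$ extends $\mathcal{B}$) if $\mathcal{C}$ contains every rule of $\mathcal{B}$. Derivability $\vdash_{\mathcal{B}}$ of atomic sequents is the least relation such that: (Axiom/Weakening) if an atomic axiom with conclusion $\Gamma_{\mathsf{At}}\Rightarrow\Delta_{\mathsf{At}}$ is in $\mathcal{B}$, then $\vdash_{\mathcal{B}} \Theta_{\mathsf{At}},\Gamma_{\mathsf{At}}\Rightarrow\Delta_{\mathsf{At}},\Sigma_{\mathsf{At}}$ for all sets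 of atoms $\Theta_{\mathsf{At}},\Sigma_{\mathsf{At}}$; (Mix) if a rule with premises $\Gamma^i_{\mathsf{At}}\Rightarrow\Delta^i_{\mathsf{At}}$ ($1\le i\le n$) and conclusion $\Gamma_{\mathsf{At}}\Rightarrow\Delta_{\mathsf{At}}$ is in $\mathcal{B}$ and $\vdash_{\mathcal{B}} \Theta^i_{\mathsf{At}},\Gamma^i_{\mathsf{At}}\Rightarrow\Delta^i_{\mathsf{At}},\Sigma^i_{\mathsf{At}}$ for each $i$, then $\vdash_{\mathcal{B}} \Theta^1_{\mathsf{At}},\dots,\Theta^n_{\mathsf{At}},\Gamma_{\mathsf{At}}\Rightarrow\Delta_{\mathsf{At}},\Sigma^1_{\mathsf{At}},\dots,\Sigma^n_{\mathsf{At}}$. Support $\Vdash_{\mathcal{B}}$: (At) $\Vdash_{\mathcal{B}}\Gamma_{\mathsf{At}}$ iff $\vdash_{\mathcal{B}}\ \Rightarrow\Gamma_{\mathsf{At}}$; ($\land$) $\Vdash_{\mathcal{B}} A\land B,\Gamma$ iff $\Vdash_{\mathcal{B}}A,\Gamma$ and $\Vdash_{\mathcal{B}}B,\Gamma$; ($\lor$) $\Vdash_{\mathcal{B}}A\lor B,\Gamma$ iff $\Vdash_{\mathcal{B}}A,B,\Gamma$; ($\to$) $\Vdash_{\mathcal{B}}A\to B,\Gamma$ iff $A\Vdash_{\mathcal{B}}B,\Gamma$; ($\bot$) $\Vdash_{\mathcal{B}}\bot,\Gamma$ iff $\Vdash_{\mathcal{B}}\Gamma$; (Inf) for $n\ge1$,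 $\{A^1,\dots,A^n\}\Vdash_{\mathcal{B}}\Delta$ iff for every $\mathcal{C}\supseteq\mathcal{B}$ and all sets of atoms $\Theta^1_{\mathsf{At}},\dots,\Theta^n_{\mathsf{At}}$, if $\Vdash_{\mathcal{C}}\Theta^i_{\mathsf{At}},A^i$ for all $i$ then $\Vdash_{\mathcal{C}}\Theta^1_{\mathsf{At}},\dots,\Theta^n_{\mathsf{At}},\Delta$ (and $\varnothing\Vdash_{\mathcal{B}}\Delta$ means $\Vdash_{\mathcal{B}}\Delta$). *)

From HB Require Import structures.
From mathcomp Require Import all_boot.
From mathcomp Require Import finmap.

Set Implicit Arguments.
Unset Strict Implicit.
Unset Printing Implicit Defensive.

Local Open Scope fset_scope.

Inductive form : Type :=
| Atom of nat
| Bot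
| And of form & form
| Or of form & form
| Imp of form & form.

Fixpoint form_enc (F : form) : GenTree.tree nat :=
  match F with
  | Atom p => GenTree.Leaf p
  | Bot => GenTree.Node 0 [::]
  | And A B => GenTree.Node 1 [:: form_enc A; form_enc B]
  | Or A B => GenTree.Node 2 [:: form_enc A; form_enc B]
  | Imp A B => GenTree.Node 3 [:: form_enc A; form_enc B]
  end.

Fixpoint form_dec (t : GenTree.tree nat) : option form :=
  match t with
  | GenTree.Leaf p => Some (Atom p)
  | GenTree.Node 0 [::] => Some Bot
  | GenTree.Node n [:: ta; tb] =>
      match form_dec ta, form_dec tb with
      | Some A, Some B =>
          match n with
          | 1 => Some (And A B)
          | 2 => Some (Or A B)
          | 3 => Some (Imp A B)
          | _ => None
          end
      | _, _ => None
      end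
  | _ => None
  end.

Lemma form_encK : pcancel form_enc form_dec.
Proof. by elim=> //= [A -> B ->|A -> B ->|A -> B ->]. Qed.

HB.instance Definition _ := Countable.copy form (pcan_type form_encK).

(* An atomic sequent Gamma_At => Delta_At is a pair of finite sets of atoms. *)
Definition aseq := ({fset nat} * {fset nat})%type.

Record rule := Rule { prem : seq aseq ; concl : aseq }.

Definition base := rule -> Prop.

Definition extends (C B : base) : Prop := forall r, B r -> C r.

Definition bigU (s : seq {fset nat}) : {fset nat} := \big[fsetU/fset0]_(X <- s) X.

(* |-_B Gamma => Delta : least relation closed under Axiom/Weakening and Mix. *)
Inductive derivable (B : base) : {fset nat} -> {fset nat} -> Prop :=
| der_ax : forall (r : rule) (Th Sg : {fset nat}),
    B r -> prem r = [::] ->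
    derivable B (Th `|` (concl r).1) ((concl r).2 `|` Sg)
| der_mix : forall (r : rule) (ThSg : seq aseq),
    B r -> size ThSg = size (prem r) ->
    (forall i, i < size (prem r) ->
       derivable B ((nth (fset0, fset0) ThSg i).1 `|` (nth (fset0, fset0) (prem r) i).1)
                   ((nth (fset0, fset0) (prem r) i).2 `|` (nth (fset0, fset0) ThSg i).2)) ->
    derivable B (bigU (map fst ThSg) `|` (concl r).1)
                ((concl r).2 `|` bigU (map snd ThSg)).

Definition atomsF (Th : {fset nat}) : {fset form} := [fset Atom p | p in Th].

Definition get_atom (F : form) : option nat :=
  if F is Atom p then Some p else None.

Definition is_atom (F : form) : bool := if F is Atom _ then true else false.

Definition atoms_of (G : {fset form}) : {fset nat} :=
  seq_fset tt (pmap get_atom (enum_fset G)).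

Definition pick_nonatomic (G : {fset form}) : option form :=
  ohead [seq F <- enum_fset G | ~~ is_atom F].

Fixpoint deg (F : form) : nat :=
  match F with
  | Atom _ => 0
  | Bot => 1
  | And A B | Or A B | Imp A B => (deg A + deg B).+1
  end.

Definition measure (G : {fset form}) : nat := \sum_(F <- enum_fset G) deg F.

(* Fuel-based rendering of the clauses (At), (and), (or), (->), (bot), where
   the (->) clause is unfolded through (Inf) with n = 1:
     ||-_B A -> B', Gamma  iff  A ||-_B B', Gamma
       iff for all C >= B and atoms Th, ||-_C Th, A  implies  ||-_C Th, B', Gamma. *)
Fixpoint supp (k : nat) (B : base) (G : {fset form}) {struct k} : Prop :=
  match k with
  | 0 => False
  | k.+1 =>
    match pick_nonatomic G with
    | None => derivable B fset0 (atoms_of G)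
    | Some F =>
      let R := G `\ F in
      match F with
      | Atom _ => False (* unreachable *)
      | Bot => supp k B R
      | And A1 A2 => supp k B (A1 |` R) /\ supp k B (A2 |` R)
      | Or A1 A2 => supp k B (A1 |` (A2 |` R))
      | Imp A1 A2 =>
          forall C : base, extends C B ->
          forall Th : {fset nat},
            supp k C (atomsF Th `|` [fset A1]) ->
            supp k C (atomsF Th `|` (A2 |` R))
      end
    end
  end.

(* ||-_B Gamma  (fuel = measure + 1 suffices) *)
Definition supports (B : base) (G : {fset form}) : Prop :=
  supp (measure G).+1 B G.

Definition bigUF (n : nat) (Th : 'I_n -> {fset form}) : {fset form} :=
  \big[fsetU/fset0]_(i < n) Th i.

(* (Inf): {A^1,...,A^n} ||-_B Delta, for an indexed family A : 'I_n -> form. *)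
Definition infers (B : base) (n : nat) (A : 'I_n -> form) (D : {fset form}) : Prop :=
  if n == 0 then supports B D
  else forall C : base, extends C B ->
       forall Th : 'I_n -> {fset nat},
         (forall i, supports C (atomsF (Th i) `|` [fset A i])) ->
         supports C (bigUF (fun i => atomsF (Th i)) `|` D).

From Pilot Require Import Defs.
From HB Require Import structures.
From mathcomp Require Import all_boot.
From mathcomp Require Import finmap.
From mathcomp Require Import zify.
From Stdlib Require Import PropExtensionality FunctionalExtensionality.

Set Implicit Arguments.
Unset Strict Implicit.
Unset Printing Implicit Defensive.

Local Open Scope fset_scope.

(* Support is evaluated in continuation-passing style: decomposing a context
   through the clauses of support yields extensions [C] of the base and atomic
   residues [T], which are handed to a continuation. This evaluation does not
   depend on the order or multiplicity of formulas, so it agrees with the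
   fuel-based [supp] on finite sets. Read this way, ||-_C Θ, Δ says that every
   residue [T] of Θ, reached in an extension C', gives ||-_C' T, Δ. Hence
   ||-_C Θ, A together with "||-_C' S, A implies ||-_C' S, Δ for all atomic S"
   yields ||-_C Θ, Δ: a cut against an arbitrary side context. Applying it to the
   premises of (Inf) one index at a time makes all side contexts arbitrary. *)

Lemma extends_refl B : extends B B.
Proof. by []. Qed.

Lemma extends_trans B C D : extends C B -> extends D C -> extends D B.
Proof. by move=> hBC hCD r /hBC /hCD. Qed.

Lemma derivable_extends B C G D : extends C B -> derivable B G D -> derivable C G D.
Proof.
move=> hBC; elim => [r Th Sg Br Hp|r ThSg Br Hsz _ IH].
  by apply: der_ax => //; apply: hBC.
by apply: der_mix IH => //; apply: hBC.
Qed.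

Lemma derivable_setUr B G D E : derivable B G D -> derivable B G (D `|` E).
Proof.
elim => [r Th Sg Br Hp|r [|t ts] Br Hsz Hprem IH].
- by rewrite -fsetUA; apply: der_ax.
- have Hp : prem r = [::] by case: (prem r) Hsz.
  by rewrite /Defs.bigU /= big_nil fsetU0; apply: der_ax.
have -> : (concl r).2 `|` Defs.bigU (map snd (t :: ts)) `|` E =
          (concl r).2 `|` Defs.bigU (map snd ((t.1, t.2 `|` E) :: ts)).
  by rewrite /Defs.bigU /= !big_cons -!fsetUA [E `|` _]fsetUC.
apply: (@der_mix B r ((t.1, t.2 `|` E) :: ts) Br Hsz) => -[|i] hi; last exact: Hprem.
by rewrite /= fsetUA; apply: (IH 0).
Qed.

Lemma derivable_weakR B G D D' : D `<=` D' -> derivable B G D -> derivable B G D'.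
Proof. by move=> /fsetUidPr <-; apply: derivable_setUr. Qed.

Definition cont := base -> {fset nat} -> Prop.

(* [evF F B K] reads "[F, Γ] is supported in [B]", the support of the rest [Γ]
   being delegated to [K]: [K C P] has to hold for every extension [C] and atom
   set [P] in which the decomposition of [F] ends. In the implication clause,
   [S] is the atomic side context of (Inf). *)

Fixpoint evF (F : form) (B : base) (K : cont) : Prop :=
  match F with
  | Atom p => K B [fset p]
  | Bot => K B fset0
  | And F1 F2 => evF F1 B K /\ evF F2 B K
  | Or F1 F2 => evF F1 B (fun C P => evF F2 C (fun C' Q => K C' (P `|` Q)))
  | Imp a b => forall C, extends C B -> forall S : {fset nat},
      evF a C (fun C' P => derivable C' fset0 (S `|` P)) ->
      evF b C (fun C' P => K C' (S `|` P))
  end.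

Definition persistent (K : cont) :=
  forall B C P, extends C B -> K B P -> K C P.

Definition monotone (K : cont) :=
  forall B C P Q, extends C B -> P `<=` Q -> K B P -> K C Q.

Lemma monotone_persistent K : monotone K -> persistent K.
Proof. by move=> hK B C P hBC; apply: hK. Qed.

Lemma monotone_setU K T : monotone K -> monotone (fun C R => K C (T `|` R)).
Proof. by move=> hK B C P Q hBC hPQ; apply: hK => //; apply: fsetUS. Qed.

Lemma persistent_derivable S : persistent (fun C P => derivable C fset0 (S `|` P)).
Proof. by move=> B C P; apply: derivable_extends. Qed.

Lemma cont_funext (K K' : cont) : (forall C P, K C P = K' C P) -> K = K'.
Proof. by move=> hK; do 2!apply: functional_extensionality => ?; apply: hK. Qed.

Lemma evF_congr F B (K K' : cont) : (forall C P, K C P = K' C P) -> evF F B K = evF F B K'.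
Proof. by move=> /cont_funext ->. Qed.

Lemma evF_sub F B (K K' : cont) :
  (forall C P, extends C B -> K C P -> K' C P) -> evF F B K -> evF F B K'.
Proof.
elim: F B K K' => [p||F1 IH1 F2 IH2|F1 IH1 F2 IH2|a _ b IHb] B K K' hK /=.
- exact: hK.
- exact: hK.
- by case=> h1 h2; split; [apply: IH1 h1|apply: IH2 h2].
- apply: IH1 => C P hBC; apply: IH2 => C' Q hCC'.
  by apply: hK; apply: extends_trans hCC'.
- move=> H C hBC S hS; apply: IHb (H C hBC S hS) => C' P hCC'.
  by apply: hK; apply: extends_trans hCC'.
Qed.

Lemma evF_extends F B C (K : cont) :
  persistent K -> extends C B -> evF F B K -> evF F C K.
Proof.
elim: F B C K => [p||F1 IH1 F2 IH2|F1 IH1 F2 IH2|a _ b _] B C K hK hBC /=.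
- exact: hK.
- exact: hK.
- by case=> h1 h2; split; [apply: IH1 h1|apply: IH2 h2].
- by apply: IH1 => // B' C' P hB'C'; apply: IH2 => // ? ? ?; apply: hK.
- by move=> H C' hCC' S; apply: H; apply: extends_trans hCC'.
Qed.

Lemma evF_der_extends a S B C : extends C B ->
  evF a B (fun C' P => derivable C' fset0 (S `|` P)) ->
  evF a C (fun C' P => derivable C' fset0 (S `|` P)).
Proof. exact/evF_extends/persistent_derivable. Qed.

Lemma evF_of_all F B (K : cont) : (forall C P, extends C B -> K C P) -> evF F B K.
Proof.
elim: F B K => [p||F1 IH1 F2 IH2|F1 IH1 F2 IH2|a _ b IHb] B K hK /=.
- exact: hK.
- exact: hK.
- by split; [apply: IH1|apply: IH2].
- apply: IH1 => C P hBC; apply: IH2 => C' Q hCC'.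
  by apply: hK; apply: extends_trans hCC'.
- move=> C hBC S _; apply: IHb => C' P hCC'.
  by apply: hK; apply: extends_trans hCC'.
Qed.

Lemma evF_weak F B (K : cont) P :
  monotone K -> K B P -> evF F B (fun C Q => K C (P `|` Q)).
Proof.
by move=> hK hP; apply: evF_of_all => C Q hBC; apply: hK hP => //; apply: fsubsetUl.
Qed.

Lemma monotone_evF F (K : cont) :
  monotone K -> monotone (fun C T => evF F C (fun C' R => K C' (T `|` R))).
Proof.
move=> hK B C P Q hBC hPQ H.
apply: (evF_extends (B := B)) => //; first exact: monotone_persistent (monotone_setU hK).
by apply: evF_sub H => C' R _; apply: hK => //; apply: fsetSU.
Qed.

Lemma evF_and F B (K1 K2 : cont) :
  evF F B (fun C P => K1 C P /\ K2 C P) = (evF F B K1 /\ evF F B K2).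
Proof.
elim: F B K1 K2 => [p||F1 IH1 F2 IH2|F1 IH1 F2 IH2|a _ b IHb] B K1 K2 //=.
- by apply: propositional_extensionality; rewrite IH1 IH2; tauto.
- by under evF_congr => C P do rewrite IH2; rewrite IH1.
apply: propositional_extensionality; split=> [H|[H1 H2] C hBC S hS].
  by split=> C hBC S hS; have := H C hBC S hS; rewrite IHb; case.
by rewrite IHb; split; [apply: H1|apply: H2].
Qed.

Lemma evF_forall (X : Type) (hyp : X -> base -> Prop)
    (hyp_extends : forall x B C, extends C B -> hyp x B -> hyp x C) G B (K : X -> cont) :
  evF G B (fun C Q => forall C', extends C' C -> forall x, hyp x C' -> K x C' Q) =
  (forall C', extends C' B -> forall x, hyp x C' -> evF G C' (K x)).
Proof.
elim: G B K => [p||F1 IH1 F2 IH2|F1 IH1 F2 IH2|a _ b IHb] B K //=.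
- rewrite IH1 IH2; apply: propositional_extensionality; split.
    by case=> H1 H2 C hBC x hx; split; [apply: H1|apply: H2].
  by move=> H; split=> C hBC x hx; have [] := H C hBC x hx.
- under evF_congr => C P do rewrite (IH2 C (fun x C'' Q => K x C'' (P `|` Q))).
  by rewrite (IH1 B (fun x C'' P => evF F2 C'' (fun C' Q => K x C' (P `|` Q)))).
apply: propositional_extensionality; split=> H.
  move=> C' hBC' x hx C hC'C S hS.
  have := H C (extends_trans hBC' hC'C) S hS.
  rewrite (IHb C (fun x C'' P => K x C'' (S `|` P))).
  by apply=> //; apply: hyp_extends hx.
move=> C hBC S hS; rewrite (IHb C (fun x C'' P => K x C'' (S `|` P))) => C'' hCC'' x hx.
have hS'' := evF_der_extends hCC'' hS.
exact: (H C'' (extends_trans hBC hCC'') x hx C'' (@extends_refl _) S hS'').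
Qed.

Lemma evF_comm F G B (K : base -> {fset nat} -> {fset nat} -> Prop) :
  evF F B (fun C P => evF G C (fun C' Q => K C' P Q)) =
  evF G B (fun C Q => evF F C (fun C' P => K C' P Q)).
Proof.
elim: F G B K => [p||F1 IH1 F2 IH2|F1 IH1 F2 IH2|a _ b IHb] G B K //=.
- by rewrite IH1 IH2 -evF_and.
- under evF_congr => C P1 do rewrite (IH2 G C (fun C'' P2 Q => K C'' (P1 `|` P2) Q)).
  by rewrite (IH1 G B (fun C' P1 Q => evF F2 C' (fun C'' P2 => K C'' (P1 `|` P2) Q))).
rewrite (evF_forall (@evF_der_extends a)).
apply: propositional_extensionality; split=> H C hBC S hS.
  by rewrite -(IHb G C (fun C'' P Q => K C'' (S `|` P) Q)); apply: H.
by rewrite (IHb G C (fun C'' P Q => K C'' (S `|` P) Q)); apply: H.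
Qed.

Definition contractible F := forall B (K : cont), monotone K ->
  evF F B (fun C P => evF F C (fun C' Q => K C' (P `|` Q))) = evF F B K.

Lemma contractible_And F1 F2 :
  contractible F1 -> contractible F2 -> contractible (And F1 F2).
Proof.
move=> h1 h2 B K hK /=; rewrite !evF_and h1 // h2 //.
apply: propositional_extensionality; split=> [[[H1 _] [_ H2]] //|[H1 H2]].
by split; split=> //; [apply: evF_sub H1|apply: evF_sub H2] => C P _ hP; apply: evF_weak.
Qed.

Lemma contractible_Or F1 F2 :
  contractible F1 -> contractible F2 -> contractible (Or F1 F2).
Proof.
move=> h1 h2 B K hK /=.
rewrite -[RHS](h1 B (fun C T => evF F2 C (fun C' R => K C' (T `|` R))));
  last exact: monotone_evF.
apply: evF_congr => C P1.
rewrite (evF_comm F2 F1 C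
  (fun C' P2 Q1 => evF F2 C' (fun C'' Q2 => K C'' ((P1 `|` P2) `|` (Q1 `|` Q2))))).
apply: evF_congr => C' Q1.
rewrite -(h2 C' (fun C'' R => K C'' ((P1 `|` Q1) `|` R))); last exact: monotone_setU.
by do 2!apply: evF_congr => ? ?; rewrite fsetUACA.
Qed.

Lemma contractible_Imp a b : contractible b -> contractible (Imp a b).
Proof.
move=> hb B K hK /=.
pose Kab S := fun S' C Q => evF b C (fun C' P => K C' ((S `|` Q) `|` (S' `|` P))).
apply: propositional_extensionality; split=> H C hBC S hS.
  move: (H C hBC S hS); rewrite (evF_forall (@evF_der_extends a) b C (Kab S)).
  move=> /(_ C (@extends_refl _) S hS).
  rewrite -(hb C (fun C' R => K C' (S `|` R))); last exact: monotone_setU.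
  by apply: evF_sub => C' Q _; apply: evF_sub => C'' P _; rewrite fsetUACA fsetUid fsetUA.
rewrite (evF_forall (@evF_der_extends a) b C (Kab S)) => C' hCC' S' hS'.
have hSS' : evF b C' (fun C'' R => K C'' ((S `|` S') `|` R)).
  apply: evF_sub (H C' (extends_trans hBC hCC') S' hS') => C'' R _.
  by apply: hK; [apply: extends_refl|apply/fsetSU/fsubsetUr].
rewrite -(hb C' (fun C'' R => K C'' ((S `|` S') `|` R))) in hSS'; last exact: monotone_setU.
by apply: evF_sub hSS' => C'' Q _; apply: evF_sub => C3 P _; rewrite fsetUACA.
Qed.

Lemma evF_contract F : contractible F.
Proof.
elim: F => [p||F1 h1 F2 h2|F1 h1 F2 h2|a _ b hb].
- by move=> B K _ /=; rewrite fsetUid.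
- by move=> B K _ /=; rewrite fsetUid.
- exact: contractible_And.
- exact: contractible_Or.
- exact: contractible_Imp.
Qed.

Fixpoint evL (l : seq form) (B : base) (K : cont) : Prop :=
  if l is F :: l then evF F B (fun C P => evL l C (fun C' Q => K C' (P `|` Q)))
  else K B fset0.

Lemma evL_congr l B (K K' : cont) : (forall C P, K C P = K' C P) -> evL l B K = evL l B K'.
Proof. by move=> /cont_funext ->. Qed.

Lemma evL_sub l B (K K' : cont) :
  (forall C P, extends C B -> K C P -> K' C P) -> evL l B K -> evL l B K'.
Proof.
elim: l B K K' => [|F l IH] B K K' hK /=; first by apply: hK; apply: extends_refl.
apply: evF_sub => C P hBC; apply: IH => C' Q hCC'.
by apply: hK; apply: extends_trans hCC'.
Qed.

Lemma evL_extends l B C (K : cont) :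
  persistent K -> extends C B -> evL l B K -> evL l C K.
Proof.
elim: l B C K => [|F l IH] B C K hK hBC /=; first exact: hK.
by apply: evF_extends hBC => B' C' P hB'C'; apply: IH hB'C' => ? ? ?; apply: hK.
Qed.

Lemma monotone_evL l (K : cont) :
  monotone K -> monotone (fun C T => evL l C (fun C' R => K C' (T `|` R))).
Proof.
move=> hK B C P Q hBC hPQ H.
apply: (evL_extends (B := B)) => //; first exact: monotone_persistent (monotone_setU hK).
by apply: evL_sub H => C' R _; apply: hK => //; apply: fsetSU.
Qed.

Lemma evL_cat l1 l2 B (K : cont) :
  evL (l1 ++ l2) B K = evL l1 B (fun C T => evL l2 C (fun C' R => K C' (T `|` R))).
Proof.
elim: l1 B K => [|F l1 IH] B K /=; first by apply: evL_congr => C R; rewrite fset0U.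
apply: evF_congr => C P; rewrite IH.
by apply: evL_congr => C' Q; apply: evL_congr => C'' R; rewrite fsetUA.
Qed.

Lemma evL_atoms s B (K : cont) : evL (map Atom s) B K = K B (seq_fset tt s).
Proof.
elim: s B K => [|p s IH] B K.
  by rewrite -[LHS]/(K B fset0); congr (K B _); apply/fsetP => x; rewrite seq_fsetE.
rewrite map_cons [LHS]/= IH; congr (K B _); apply/fsetP => x.
by rewrite !in_fsetU !seq_fsetE in_fset1 inE.
Qed.

Lemma evL_swap F G l B (K : cont) : evL [:: F, G & l] B K = evL [:: G, F & l] B K.
Proof.
rewrite /= (evF_comm F G B (fun C' P Q => evL l C' (fun C'' R => K C'' (P `|` (Q `|` R))))).
by do 2!apply: evF_congr => ? ?; apply: evL_congr => C'' R; rewrite fsetUCA.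
Qed.

Lemma evL_dup F l B (K : cont) : monotone K -> evL [:: F, F & l] B K = evL (F :: l) B K.
Proof.
move=> hK /=; rewrite -[RHS](evF_contract F B (monotone_evL (l := l) hK)).
by do 2!apply: evF_congr => ? ?; apply: evL_congr => C'' R; rewrite fsetUA.
Qed.

Lemma evL_perm l l' B (K : cont) : perm_eq l l' -> evL l B K = evL l' B K.
Proof.
elim: l l' B K => [|F l IH] l' B K hll'; first by case: l' hll' => // G l' /perm_size.
have hF : F \in l' by rewrite -(perm_mem hll') inE eqxx.
have -> : evL l' B K = evL (F :: rem F l') B K.
  elim: l' {hll'} hF B K => //= G l' IHl' hF B K; case: eqP => [->//|/eqP hGF].
  rewrite inE eq_sym (negbTE hGF) /= in hF.
  rewrite -[RHS]/(evL [:: F, G & rem F l'] B K) evL_swap /=.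
  by apply: evF_congr => C P; apply: IHl'.
apply: evF_congr => C P; apply: IH.
by rewrite -(perm_cons F); apply: perm_trans hll' (perm_to_rem hF).
Qed.

Lemma evL_undup l B (K : cont) : monotone K -> evL l B K = evL (undup l) B K.
Proof.
elim: l B K => [|F l IH] B K hK //; rewrite [undup _]/=; case: ifP => hF; last first.
  by apply: evF_congr => C P; exact: IH (monotone_setU hK).
rewrite (@evL_perm _ [:: F, F & rem F l]); last by rewrite perm_cons perm_to_rem.
by rewrite evL_dup // -(IH B K hK); apply: evL_perm; rewrite perm_sym perm_to_rem.
Qed.

Lemma evL_eq_mem l l' B (K : cont) : monotone K -> l =i l' -> evL l B K = evL l' B K.
Proof.
move=> hK hll'; rewrite evL_undup // [RHS]evL_undup //.
by apply/evL_perm/uniq_perm; rewrite ?undup_uniq // => x; rewrite !mem_undup.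
Qed.

Definition evS (G : {fset form}) : base -> cont -> Prop := evL (enum_fset G).

Definition derives : cont := fun C P => derivable C fset0 P.

Definition sem B (G : {fset form}) : Prop := evS G B derives.

Lemma monotone_derives : monotone derives.
Proof. by move=> B C P Q hBC hPQ /(derivable_extends hBC); apply: derivable_weakR. Qed.

Lemma evS_setU X Y B (K : cont) : monotone K ->
  evS (X `|` Y) B K = evS X B (fun C T => evS Y C (fun C' R => K C' (T `|` R))).
Proof.
move=> hK; rewrite /evS -evL_cat; apply: evL_eq_mem => // x.
by rewrite mem_cat in_fsetU.
Qed.

Lemma evS_setU1 F R B (K : cont) : monotone K ->
  evS (F |` R) B K = evF F B (fun C P => evS R C (fun C' Q => K C' (P `|` Q))).
Proof.
move=> hK; rewrite /evS (@evL_eq_mem _ (F :: enum_fset R)) // => x.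
by rewrite in_fsetU in_fset1 inE.
Qed.

Lemma evS_fset1 F B (K : cont) : monotone K -> evS [fset F] B K = evF F B K.
Proof.
move=> hK; rewrite /evS (@evL_eq_mem _ [:: F]) //= => [|x]; last by rewrite in_fset1 inE.
by apply: evF_congr => C P; rewrite fsetU0.
Qed.

Lemma evS_atomsF Th B (K : cont) : monotone K -> evS (atomsF Th) B K = K B Th.
Proof.
move=> hK; rewrite /evS (@evL_eq_mem _ (map Atom (enum_fset Th))) // => [|x].
  by rewrite evL_atoms; congr (K B _); apply/fsetP => p; rewrite seq_fsetE.
by apply/imfsetP/mapP => -[p hp ->]; exists p.
Qed.

Lemma sem_extends B C G : extends C B -> sem B G -> sem C G.
Proof. by move=> hBC; apply: evL_extends hBC; exact: monotone_persistent monotone_derives. Qed.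

Lemma sem_atomsFU Th Y B :
  sem B (atomsF Th `|` Y) = evS Y B (fun C R => derivable C fset0 (Th `|` R)).
Proof.
rewrite /sem evS_setU ?evS_atomsF //; last exact: monotone_derives.
exact: monotone_evL monotone_derives.
Qed.

Lemma sem_atomic B G :
  all is_atom (enum_fset G) -> sem B G = derivable B fset0 (atoms_of G).
Proof.
rewrite /sem /evS /atoms_of; move: (enum_fset G) => s hs.
suff {1}-> : s = map Atom (pmap get_atom s) by rewrite evL_atoms.
by elim: s hs => //= -[] //= p s IH /IH {1}->.
Qed.

Lemma sem_Bot B R : sem B (Bot |` R) = sem B R.
Proof.
rewrite /sem evS_setU1 /=; last exact: monotone_derives.
by rewrite /evS (@evL_congr _ _ _ derives) // => C P; rewrite fset0U.
Qed.

Lemma sem_And B A1 A2 R : sem B (And A1 A2 |` R) = (sem B (A1 |` R) /\ sem B (A2 |` R)).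
Proof. by have hD := monotone_derives; rewrite /sem !evS_setU1. Qed.

Lemma sem_Or B A1 A2 R : sem B (Or A1 A2 |` R) = sem B (A1 |` (A2 |` R)).
Proof.
have hD := monotone_derives; rewrite /sem !evS_setU1 //=.
apply: evF_congr => C P; rewrite evS_setU1 /=; last exact: monotone_setU.
by apply: evF_congr => C' Q; apply: evL_congr => C'' S; rewrite fsetUA.
Qed.

Lemma sem_Imp B a b R :
  sem B (Imp a b |` R) <->
  (forall C, extends C B -> forall Th,
     sem C (atomsF Th `|` [fset a]) -> sem C (atomsF Th `|` (b |` R))).
Proof.
have hD := monotone_derives.
have ha D Th : sem D (atomsF Th `|` [fset a]) =
               evF a D (fun C' P => derivable C' fset0 (Th `|` P)).
  by rewrite sem_atomsFU evS_fset1 //; exact: (monotone_setU (T := Th) hD).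
have hb D Th : sem D (atomsF Th `|` (b |` R)) =
               evF b D (fun C' P => evS R C' (fun C'' Q => derives C'' ((Th `|` P) `|` Q))).
  rewrite sem_atomsFU evS_setU1; last exact: (monotone_setU (T := Th) hD).
  by apply: evF_congr => C' P; apply: evL_congr => C'' Q; rewrite fsetUA.
rewrite {1}/sem evS_setU1 //=.
by split=> H C hBC Th; [rewrite ha hb|rewrite -ha -hb]; apply: H.
Qed.

Lemma measure_perm G l : perm_eq (enum_fset G) l -> measure G = \sum_(F <- l) deg F.
Proof. by move=> hG; rewrite /measure (perm_big _ hG). Qed.

Lemma sum_deg_undup (s : seq form) : \sum_(F <- undup s) deg F <= \sum_(F <- s) deg F.
Proof.
elim: s => //= F s IH; rewrite big_cons; case: ifP => _; last by rewrite big_cons leq_add2l.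
exact: leq_trans IH (leq_addl _ _).
Qed.

Lemma measureU X Y : measure (X `|` Y) <= measure X + measure Y.
Proof.
rewrite (@measure_perm _ (undup (enum_fset X ++ enum_fset Y))).
  by rewrite /measure -big_cat; apply: sum_deg_undup.
apply: uniq_perm; rewrite ?fset_uniq ?undup_uniq // => x.
by rewrite mem_undup mem_cat in_fsetU.
Qed.

Lemma measure1 a : measure [fset a] = deg a.
Proof.
rewrite (@measure_perm _ [:: a]) ?big_seq1 //.
by apply: uniq_perm; rewrite ?fset_uniq // => x; rewrite in_fset1 inE.
Qed.

Lemma measure_setU1 a R : measure (a |` R) <= deg a + measure R.
Proof. by rewrite -measure1; apply: measureU. Qed.

Lemma measure_atomsFU Th X : measure (atomsF Th `|` X) <= measure X.
Proof.
have hTh : measure (atomsF Th) = 0.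
  by rewrite /measure big_seq big1 // => F /imfsetP[p _ ->].
by have := measureU (atomsF Th) X; rewrite hTh.
Qed.

Lemma measure_fsetD1 F G : F \in G -> measure G = (deg F + measure (G `\ F))%N.
Proof.
move=> hF; rewrite (@measure_perm _ (F :: enum_fset (G `\ F))) ?big_cons //.
apply: uniq_perm; rewrite /= ?fset_uniq ?andbT ?in_fsetD1 ?eqxx // => x.
by rewrite inE in_fsetD1; case: eqP => [->|].
Qed.

Lemma pick_nonatomic_some G F : pick_nonatomic G = Some F -> F \in G /\ ~~ is_atom F.
Proof.
rewrite /pick_nonatomic; case hs: [seq F <- enum_fset G | ~~ is_atom F] => [|F' s] //= [<-].
by have := mem_head F' s; rewrite -hs mem_filter => /andP[-> ->].
Qed.

Lemma pick_nonatomic_none G : pick_nonatomic G = None -> all is_atom (enum_fset G).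
Proof.
rewrite /pick_nonatomic; case hs: [seq F <- enum_fset G | ~~ is_atom F] => //= _.
apply/allP => F hF; apply/negPn/negP => hna.
by have := mem_filter (fun F => ~~ is_atom F) F (enum_fset G); rewrite hs hna hF.
Qed.

Lemma supp_sem k B G : measure G < k -> supp k B G <-> sem B G.
Proof.
elim: k B G => [//|k IH] B G hk /=.
case E: (pick_nonatomic G) => [F|]; last by rewrite sem_atomic // pick_nonatomic_none.
have [hFG hFna] := pick_nonatomic_some E.
rewrite -[in sem B G](fsetD1K hFG); rewrite (measure_fsetD1 hFG) in hk.
move: (G `\ F) hk => R hk; case: F hFna {E hFG} hk => [p||A1 A2|A1 A2|a b] //= _ hk.
- by rewrite sem_Bot IH //; lia.
- by rewrite sem_And !IH //; have := measure_setU1 A1 R; have := measure_setU1 A2 R; lia.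
- rewrite sem_Or IH //.
  by have := measure_setU1 A1 (A2 |` R); have := measure_setU1 A2 R; lia.
have ha Th : measure (atomsF Th `|` [fset a]) < k.
  by have := measure_atomsFU Th [fset a]; rewrite measure1; lia.
have hb Th : measure (atomsF Th `|` (b |` R)) < k.
  by have := measure_atomsFU Th (b |` R); have := measure_setU1 b R; lia.
by rewrite sem_Imp; split=> H C hBC Th /(IH C _ (ha Th)) /(H C hBC Th) /(IH C _ (hb Th)).
Qed.

Lemma supports_sem B G : supports B G <-> sem B G.
Proof. exact: supp_sem. Qed.

Lemma sem_cut C (Th X : {fset form}) A :
  (forall C', extends C' C -> forall S,
     sem C' (atomsF S `|` [fset A]) -> sem C' (atomsF S `|` X)) ->
  sem C (Th `|` [fset A]) -> sem C (Th `|` X).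
Proof.
have hD := monotone_derives.
move=> H; rewrite /sem !evS_setU //; apply: evL_sub => C' T hCC' hT.
by move: (H C' hCC' T); rewrite !sem_atomsFU; apply.
Qed.

Lemma bigUF_D1 n (Th : 'I_n -> {fset form}) j :
  bigUF Th = Th j `|` \big[fsetU/fset0]_(i | i != j) Th i.
Proof. by rewrite /bigUF (bigD1 j). Qed.

Section Inference.

Variables (B : base) (n : nat) (A : 'I_n -> form) (D : {fset form}).

Definition atomic_from m (Th : 'I_n -> {fset form}) :=
  forall i : 'I_n, m <= i -> exists S, Th i = atomsF S.

Definition inf_on (P : ('I_n -> {fset form}) -> Prop) :=
  forall C, extends C B -> forall Th, P Th ->
  (forall i, sem C (Th i `|` [fset A i])) -> sem C (bigUF Th `|` D).

Lemma inf_on_atomic :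
  (forall C, extends C B -> forall S : 'I_n -> {fset nat},
     (forall i, sem C (atomsF (S i) `|` [fset A i])) ->
     sem C (bigUF (fun i => atomsF (S i)) `|` D)) ->
  inf_on (atomic_from 0).
Proof.
move=> H C hBC Th hTh; have [S hS] := fin_all_exists (fun i => hTh i (leq0n i)).
have -> : bigUF Th = bigUF (fun i => atomsF (S i)).
  by apply: eq_bigr => i _; rewrite hS.
by move=> hsup; apply: H => // i; rewrite -hS.
Qed.

Lemma inf_on_atomic_fromS m (hm : m < n) :
  inf_on (atomic_from m) -> inf_on (atomic_from m.+1).
Proof.
move=> H C hBC Th hTh hsup; pose j := Ordinal hm.
rewrite (bigUF_D1 Th j) -fsetUA; apply: sem_cut (hsup j) => C' hCC' S hS.
pose Th' i := if i == j then atomsF S else Th i.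
have -> : atomsF S `|` (\big[fsetU/fset0]_(i | i != j) Th i `|` D) = bigUF Th' `|` D.
  rewrite (bigUF_D1 Th' j) /Th' eqxx fsetUA; congr (_ `|` _ `|` _).
  by apply: eq_bigr => i /negbTE ->.
apply: H (extends_trans hBC hCC') _ _ _ => [i hi|i].
  rewrite /Th'; case: eqP => [_|hij]; first by exists S.
  apply: hTh; rewrite ltn_neqAle hi andbT; apply/eqP => him.
  by apply: hij; apply: val_inj; rewrite /= -him.
by rewrite /Th'; case: eqP => [->//|_]; apply: sem_extends hCC' (hsup i).
Qed.

Lemma inf_on_all : inf_on (atomic_from 0) -> inf_on (fun _ => True).
Proof.
move=> H C hBC Th _; suff: inf_on (atomic_from n) by apply => // i; rewrite leqNgt ltn_ord.
have : n <= n by [].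
elim: {-2}n => // m IH hm; exact: inf_on_atomic_fromS hm (IH (ltnW hm)).
Qed.

End Inference.

Theorem lemma2 (B : base) (n : nat) (hn : 1 <= n) (A : 'I_n -> form)
    (D : {fset form}) :
  infers B A D <->
  (forall C : base, extends C B ->
   forall Th : 'I_n -> {fset form},
     (forall i, supports C (Th i `|` [fset A i])) ->
     supports C (bigUF Th `|` D)).
Proof.
have /negbTE hn0 : n != 0 by rewrite -lt0n.
rewrite /infers hn0; split=> [hinf C hBC Th hTh|H C hBC Th]; last exact: H.
have hatoms : inf_on B A D (atomic_from 0).
  apply: inf_on_atomic => C' hBC' S hS; apply/supports_sem.
  by apply: hinf => // i; apply/supports_sem.
apply/supports_sem; apply: (inf_on_all hatoms) => // i.
exact/supports_sem.
Qed.
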